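(* Let $N\ge1$. The group $\Phi_N$ is generated by $U=\{A^N,B^N\}\cup\{A^iB^jCB^{-j}A^{-i}:0\le i,j\le N-1\}$. Moreover, $\Phi_N$ has the presentation with generators $a,b,T_{i,j}$ ($0\le i,j\le N-1$), corresponding to $A^N$, $B^N$ and $A^iB^jCB^{-j}A^{-i}$ respectively, and the single relation $$aba^{-1}b^{-1}=\prod_{i=0}^{N-1}\prod_{j=0}^{N-1}T_{N-1-i,j},$$ the product being ordered with $i$ increasing in the outer product and $j$ increasing in the inner product.
   Context: Let $\bar\Gamma(2)=\Gamma(2)/\{\pm1\}\subset\mathrm{PSL}_2(\mathbb{Z})$, freely generated by the classes $A$ of $\begin{pmatrix}1&2\\0&1\end{pmatrix}$ and $B$ of $\begin{pmatrix}1&0\\2&1\end{pmatrix}$; $C=ABA^{-1}B^{-1}$. $\Phi_N$ is the kernel of the homomorphism $\bar\Gamma(2)\to(\mathbb{Z}/N\mathbb{Z})^2$ sending $A\mapsto(1,0)$ and $B\mapsto(0,1)$. *)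

From HB Require Import structures.
From mathcomp Require Import all_boot all_order all_algebra.
Set Implicit Arguments. Unset Strict Implicit. Unset Printing Implicit Defensive.
Import Order.TTheory GRing.Theory Num.Theory.

Section FreeGroup.
Variable X : eqType.

(* a letter (x, false) stands for x, (x, true) for x^-1 *)
Definition letter := (X * bool)%type.
Definition word := seq letter.

Definition linv (l : letter) : letter := (l.1, ~~ l.2).

Definition push (l : letter) (w : word) : word :=
  match w with
  | l' :: w' => if l' == linv l then w' else l :: w
  | [::] => [:: l]
  end.

Definition reduce (s : word) : word := foldr push [::] s.

(* the elements of the free group are the reduced words *)
Definition reduced (w : word) : Prop := reduce w = w.

Definition fmul (u v : word) : word := reduce (u ++ v).
Definition finv (u : word) : word := rev (map linv u).
Definition fprod (s : seq word) : word := reduce (flatten s).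
Definition fgen (x : X) : word := [:: (x, false)].
Definition fpow (u : word) (n : nat) : word := fprod (nseq n u).

Definition expsum (x : X) (w : word) : int :=
  (\sum_(l <- w | l.1 == x) (if l.2 then (-1)%R else 1%R))%R.

Definition in_subgroup_gen (S : word -> Prop) (w : word) : Prop :=
  exists s : seq (word * bool),
    (forall p, p \in s -> S p.1) /\
    w = fprod [seq (if p.2 then finv p.1 else p.1) | p <- s].

Definition in_normal_closure (r : word) (w : word) : Prop :=
  exists s : seq (word * bool),
    w = fprod [seq fprod [:: p.1; (if p.2 then finv r else r); finv p.1] | p <- s].
End FreeGroup.

Definition feval (X Y : eqType) (f : Y -> word X) (w : word Y) : word X :=
  fprod [seq (if l.2 then finv (f l.1) else f l.1) | l <- w].

(* ---------- Gamma(2)-bar, freely generated by A (= false), B (= true) ---------- *)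
Definition Gam2 := word bool.
Definition gA : Gam2 := fgen false.
Definition gB : Gam2 := fgen true.
Definition gC : Gam2 := fprod [:: gA; gB; finv gA; finv gB].

(* Phi_N : kernel of Gamma(2)-bar -> (Z/NZ)^2, A |-> (1,0), B |-> (0,1) *)
Definition Phi (N : nat) (w : Gam2) : Prop :=
  reduced w /\ (N%:Z %| expsum false w)%Z /\ (N%:Z %| expsum true w)%Z.

Definition Tw (i j : nat) : Gam2 :=
  fprod [:: fpow gA i; fpow gB j; gC; finv (fpow gB j); finv (fpow gA i)].

Definition inU (N : nat) (g : Gam2) : Prop :=
  g = fpow gA N \/ g = fpow gB N \/
  exists i j : nat, (i < N)%N /\ (j < N)%N /\ g = Tw i j.

(* generators: inl false = a, inl true = b, inr (i,j) = T_{i,j} *)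
Definition PGen (N : nat) := (bool + 'I_N * 'I_N)%type.
Definition pa (N : nat) : word (PGen N : eqType) := fgen (inl false : PGen N).
Definition pb (N : nat) : word (PGen N : eqType) := fgen (inl true : PGen N).
Definition pT (N : nat) (i j : 'I_N) : word (PGen N : eqType) := fgen (inr (i, j) : PGen N).

Definition prel (N : nat) : word (PGen N : eqType) :=
  fprod [:: pa N; pb N; finv (pa N); finv (pb N);
            finv (fprod [seq pT (rev_ord i) j | i <- enum 'I_N, j <- enum 'I_N])].

Definition pimg (N : nat) (y : PGen N) : Gam2 :=
  match y with
  | inl false => fpow gA N
  | inl true => fpow gB N
  | inr (i, j) => Tw i j
  end.

(* Reidemeister-Schreier. Phi_N has index N^2 in the free group on A and B, with
   Schreier transversal A^i B^j (0 <= i, j < N), the coset of a word being read off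
   from its exponent sums mod N.  Reading a word letter by letter while tracking its
   coset, and replacing each letter by the Schreier generator it crosses written in
   a, b, T_ij, defines a rewriting map tau.  For w in Phi_N, the image of tau w under
   a, b, T_ij |-> A^N, B^N, A^i B^j C B^-j A^-i is w again, which gives generation
   and surjectivity.  Conversely tau sends the image of every generator back to that
   generator, literally except for T_{N-1,N-1}, where the relation is needed; hence
   tau inverts the map modulo the normal closure of the relator, which is therefore
   the kernel.  The Schreier generators are identified through the telescoping
   identities prod_j B^j C B^-j = [A, B^m] and prod_i A^(m-1-i) [A, y] A^-(m-1-i) =
   [A^m, y], with [x, y] = x y x^-1 y^-1. *)

From Pilot Require Import Defs.
From HB Require Import structures.
From mathcomp Require Import all_boot all_order all_algebra zify.
(* Re-imported so that [finv] is the free-group inverse, not fingraph's. *)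
Import Defs GRing.Theory.

Set Implicit Arguments. Unset Strict Implicit. Unset Printing Implicit Defensive.

Local Open Scope group_scope.

Ltac gsimpl := repeat rewrite ?invgM ?invgK ?mulgA ?mulgK ?mulgVK ?mulgV ?mulVg
  ?mul1g ?mulg1 ?invg1; try done.

Lemma nseqSr (T : Type) m (x : T) : nseq m.+1 x = nseq m x ++ [:: x].
Proof. by rewrite -addn1 nseqD. Qed.

Section FreeReduction.
Variable X : eqType.
Implicit Types (l : letter X) (u v w z : word X).

Lemma linvK : involutive (@linv X).
Proof. by case=> x []. Qed.

Definition freely_reduced w := sorted (fun l l' => l' != linv l) w.

Lemma freely_reduced_push l w : freely_reduced w -> freely_reduced (push l w).
Proof.
case: w => [|l' w] //=; case: eqP => [_|/eqP ne] /=; first by case: w => // ? ? /andP[].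
by move=> Hw; rewrite /freely_reduced /= ne Hw.
Qed.

Lemma freely_reduced_foldr z u :
  freely_reduced z -> freely_reduced (foldr (@push X) z u).
Proof. by move=> Hz; elim: u => //= l u; apply: freely_reduced_push. Qed.

Lemma freely_reduced_reduce w : freely_reduced (reduce w).
Proof. exact: freely_reduced_foldr. Qed.

Lemma reduce_id w : freely_reduced w -> reduce w = w.
Proof.
elim: w => //= l w IH Hlw.
have Hw : freely_reduced w by case: w Hlw {IH} => // ? ? /andP[].
rewrite IH //; case: w Hlw {IH Hw} => //= l' w /andP[ne _].
by rewrite (negbTE ne).
Qed.

Lemma reduce_idem w : reduce (reduce w) = reduce w.
Proof. exact/reduce_id/freely_reduced_reduce. Qed.

Lemma push_linv l w : freely_reduced w -> push l (push (linv l) w) = w.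
Proof.
case: w => [|l' w] /=; first by rewrite eqxx.
rewrite linvK; case: eqP => [->|/eqP ne] Hw; last by rewrite /= eqxx.
by case: w Hw => [|l'' w] //= /andP[ne' _]; rewrite (negbTE ne').
Qed.

Lemma reduce_cat u v : reduce (u ++ v) = foldr (@push X) (reduce v) u.
Proof. by rewrite /reduce foldr_cat. Qed.

Lemma reduce_catr u v : reduce (u ++ reduce v) = reduce (u ++ v).
Proof. by rewrite !reduce_cat reduce_idem. Qed.

Lemma foldr_push_reduce z u :
  freely_reduced z -> foldr (@push X) z (reduce u) = foldr (@push X) z u.
Proof.
move=> Hz; elim: u => //= l u <-.
have : freely_reduced (reduce u) by apply: freely_reduced_reduce.
case: (reduce u) => [|l' y] //= Hy; case: eqP => [->|_] //=.
by rewrite push_linv // freely_reduced_foldr.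
Qed.

Lemma reduce_catl u v : reduce (reduce u ++ v) = reduce (u ++ v).
Proof. by rewrite !reduce_cat foldr_push_reduce // freely_reduced_reduce. Qed.

Lemma finv_cat u v : finv (u ++ v) = finv v ++ finv u.
Proof. by rewrite /finv map_cat rev_cat. Qed.

Lemma finvK : involutive (@finv X).
Proof. by move=> u; rewrite /finv map_rev revK (mapK linvK). Qed.

Lemma reduce_finvl u : reduce (finv u ++ u) = [::].
Proof.
elim: u => //= l u IH.
rewrite -cat1s finv_cat -catA reduce_cat /= -{2}(linvK l) push_linv.
  by rewrite -reduce_cat.
exact: freely_reduced_foldr.
Qed.

Lemma reduce_finvr u : reduce (u ++ finv u) = [::].
Proof. by rewrite -{1}(finvK u) reduce_finvl. Qed.

Lemma fpow_fgen (x : X) m : fpow (fgen x) m = nseq m (x, false).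
Proof.
have -> : fpow (fgen x) m = reduce (nseq m (x, false)).
  by rewrite /fpow /fprod; congr reduce; elim: m => //= m ->.
apply: reduce_id; elim: m => [|[|m] IH] //.
rewrite /freely_reduced /= in IH *; rewrite IH andbT.
by apply/eqP => -[].
Qed.

End FreeReduction.

Section FreeGroup.
Variable X : choiceType.
Implicit Types (u v w : word X).

Definition free_group := {w : word X | reduce w == w}.
HB.instance Definition _ := Choice.on free_group.

Definition fgw w : free_group := exist _ (reduce w) (introT eqP (reduce_idem w)).

Lemma fgw_val (x : free_group) : fgw (val x) = x.
Proof. by apply: val_inj; rewrite /= (eqP (valP x)). Qed.

Lemma fgw_reduce w : fgw (reduce w) = fgw w.
Proof. by apply: val_inj; rewrite /= reduce_idem. Qed.

Definition fg_one := fgw [::].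
Definition fg_mul (x y : free_group) := fgw (val x ++ val y).
Definition fg_inv (x : free_group) := fgw (finv (val x)).

Lemma fgw_cat u v : fgw (u ++ v) = fg_mul (fgw u) (fgw v).
Proof. by apply: val_inj; rewrite /= reduce_catl reduce_catr. Qed.

Lemma fg_mulA : associative fg_mul.
Proof. by move=> x y z; rewrite -[x]fgw_val -[y]fgw_val -[z]fgw_val -!fgw_cat catA. Qed.

Lemma fg_mul1 : left_id fg_one fg_mul.
Proof. by move=> x; rewrite -[x]fgw_val -fgw_cat. Qed.

Lemma fg_mulg1 : right_id fg_one fg_mul.
Proof. by move=> x; rewrite -[x]fgw_val -fgw_cat cats0. Qed.

Lemma fg_mulV : left_inverse fg_one fg_inv fg_mul.
Proof. by move=> x; apply: val_inj; rewrite /= reduce_catl reduce_finvl. Qed.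

Lemma fg_mulgV : right_inverse fg_one fg_inv fg_mul.
Proof. by move=> x; apply: val_inj; rewrite /= reduce_catr reduce_finvr. Qed.

HB.instance Definition _ :=
  isGroup.Build free_group fg_mulA fg_mul1 fg_mulg1 fg_mulV fg_mulgV.

Lemma fgwM u v : fgw (u ++ v) = fgw u * fgw v.
Proof. exact: fgw_cat. Qed.

Lemma fgwV u : fgw (finv u) = (fgw u)^-1.
Proof.
by apply: (mulIg (fgw u)); rewrite mulVg -fgwM; apply: val_inj; rewrite /= reduce_finvl.
Qed.

Lemma fgw_fprod (s : seq (word X)) : fgw (fprod s) = \prod_(u <- s) fgw u.
Proof.
rewrite fgw_reduce; elim: s => [|u s IH]; first by rewrite big_nil.
by rewrite big_cons /= fgwM IH.
Qed.

End FreeGroup.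

Section Evaluation.
Variables (X : eqType) (G : groupType) (g : X -> G).
Implicit Types (u w : word X).

Definition eval_word w : G := \prod_(l <- w) (if l.2 then (g l.1)^-1 else g l.1).

Lemma eval_word_cat u w : eval_word (u ++ w) = eval_word u * eval_word w.
Proof. exact: big_cat. Qed.

Lemma eval_word_reduce w : eval_word (reduce w) = eval_word w.
Proof.
rewrite /eval_word; elim: w => //= l w IH; rewrite big_cons -IH.
case: (reduce w) => [|l' u] /=; first by rewrite big_cons.
case: eqP => [->|_]; last by rewrite big_cons.
by rewrite big_cons mulgA; case: l => x [] /=; rewrite ?mulVg ?mulgV mul1g.
Qed.

End Evaluation.

Section Lift.
Variables (X : choiceType) (G : groupType) (g : X -> G).

Definition fg_lift (x : free_group X) : G := eval_word g (val x).

Lemma fg_lift_fgw w : fg_lift (fgw w) = eval_word g w.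
Proof. exact: eval_word_reduce. Qed.

Lemma fg_liftM : {morph fg_lift : x y / x * y}.
Proof. by move=> x y; rewrite /fg_lift /= eval_word_reduce eval_word_cat. Qed.

Lemma fg_lift1 : fg_lift 1 = 1.
Proof. exact: big_nil. Qed.

Lemma fg_lift_fgen x : fg_lift (fgw (fgen x)) = g x.
Proof. by rewrite fg_lift_fgw /eval_word big_seq1. Qed.

End Lift.

Lemma fgw_eval (X : choiceType) (w : word X) :
  fgw w = eval_word (fun x => fgw (fgen x)) w.
Proof.
elim: w => [|l w IH]; first by rewrite /eval_word big_nil.
rewrite -cat1s fgwM IH /eval_word big_cons; congr (_ * _).
by case: l => x [] //; rewrite -fgwV.
Qed.

Lemma feval_lift (X : eqType) (Y : choiceType) (f : X -> word Y) (v : word X) :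
  feval f v = val (eval_word (fun x => fgw (f x)) v).
Proof.
rewrite /feval -[fprod _]reduce_idem -[reduce (fprod _)]/(val (fgw _)) fgw_fprod.
by rewrite big_map; congr val; apply: eq_bigr => -[x []] _; rewrite ?fgwV.
Qed.

Section NormalClosure.
Variables (G : groupType) (r : G).

Definition in_ncl (x : G) := exists s : seq (G * bool),
  x = \prod_(p <- s) (p.1 * (if p.2 then r^-1 else r) * p.1^-1).

Lemma in_ncl1 : in_ncl 1.
Proof. by exists [::]; rewrite big_nil. Qed.

Lemma in_nclM x y : in_ncl x -> in_ncl y -> in_ncl (x * y).
Proof. by move=> [s ->] [t ->]; exists (s ++ t); rewrite big_cat. Qed.

Lemma in_nclV x : in_ncl x -> in_ncl x^-1.
Proof.
move=> [s ->]; exists (rev [seq (p.1, ~~ p.2) | p <- s]).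
rewrite -{1}(revK s) -prodgV -map_rev big_map; apply: eq_bigr => -[y []] _ /=; gsimpl.
Qed.

Lemma in_nclJ y x : in_ncl x -> in_ncl (y * x * y^-1).
Proof.
move=> [s ->]; exists [seq (y * p.1, p.2) | p <- s].
rewrite big_map; elim: s => [|p s IH]; first by rewrite !big_nil; gsimpl.
by rewrite !big_cons /= -IH; gsimpl.
Qed.

Lemma in_ncl_kernel (H : groupType) (f : G -> H) :
  {morph f : x y / x * y} -> f r = 1 -> forall x, in_ncl x -> f x = 1.
Proof.
move=> fM fr x [s ->].
have f1 : f 1 = 1 by apply: (mulgI (f 1)); rewrite -fM !mulg1.
have fV y : f y^-1 = (f y)^-1 by apply: (mulgI (f y)); rewrite -fM !mulgV.
rewrite (big_morph f fM f1) big1 // => -[y b] _.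
by rewrite !fM fV; case: b; rewrite ?fV fr; gsimpl.
Qed.

Definition eqmod x y := in_ncl (x * y^-1).

Lemma eqmod_refl x : eqmod x x.
Proof. by rewrite /eqmod mulgV; apply: in_ncl1. Qed.

Lemma eqmod_sym x y : eqmod x y -> eqmod y x.
Proof. by move=> /in_nclV; rewrite /eqmod invgM invgK. Qed.

Lemma eqmod_trans x y z : eqmod x y -> eqmod y z -> eqmod x z.
Proof. by move=> Hxy /(in_nclM Hxy); rewrite /eqmod mulgA mulgVK. Qed.

Lemma eqmodM x x' y y' : eqmod x x' -> eqmod y y' -> eqmod (x * y) (x' * y').
Proof.
move=> Hx /(in_nclJ x) Hy; have := in_nclM Hy Hx.
by rewrite /eqmod invgM !mulgA mulgVK.
Qed.

Lemma eqmod_prod (I : Type) (s : seq I) (F F' : I -> G) :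
  (forall i, eqmod (F i) (F' i)) ->
  eqmod (\prod_(i <- s) F i) (\prod_(i <- s) F' i).
Proof.
move=> eqF; elim: s => [|i s IH]; first by rewrite !big_nil; apply: eqmod_refl.
by rewrite !big_cons; apply: eqmodM.
Qed.

Lemma eqmodV x y : eqmod x y -> eqmod x^-1 y^-1.
Proof. by move=> /in_nclV /(in_nclJ x^-1); rewrite /eqmod; gsimpl. Qed.

Lemma eqmod_relator x y : eqmod (x * r * y) (x * y).
Proof.
have := in_nclJ x (_ : in_ncl r); rewrite /eqmod; gsimpl.
by apply; exists [:: (1, false)]; rewrite big_seq1 /=; gsimpl.
Qed.

End NormalClosure.

Lemma in_normal_closureP (X : choiceType) (r v : word X) : reduced v ->
  in_normal_closure r v <-> in_ncl (fgw r) (fgw v).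
Proof.
move=> Hv; split=> [[s ->] | [s Hs]].
  exists [seq (fgw p.1, p.2) | p <- s]; rewrite fgw_fprod !big_map.
  apply: eq_bigr => p _; rewrite fgw_fprod !big_cons big_nil fgwV mulg1 mulgA.
  by case: p.2; rewrite ?fgwV.
exists [seq (val p.1, p.2) | p <- s].
rewrite -Hv -[reduce v]/(val (fgw v)) -[fprod _]reduce_idem.
rewrite -[reduce (fprod _)]/(val (fgw (fprod _))) Hs fgw_fprod !big_map.
congr val; apply: eq_bigr => p _ /=.
rewrite fgw_fprod !big_cons big_nil fgwV fgw_val mulg1 mulgA.
by case: p.2; rewrite ?fgwV.
Qed.

Section CommutatorProducts.
Variable G : groupType.
Implicit Types x y : G.

Definition comm x y := x * y * x^-1 * y^-1.

Lemma prod_conj_comm_powr z x y m :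
  \prod_(k < m) (z * (y ^+ k * comm x y * y ^- k) * z^-1) = z * comm x (y ^+ m) * z^-1.
Proof.
elim: m => [|m IH]; first by rewrite big_ord0 /comm; gsimpl.
by rewrite big_ord_recr /= IH /comm expgSr; gsimpl.
Qed.

Lemma prod_conj_comm_powl x y m :
  \prod_(k < m) (x ^+ (m.-1 - k) * comm x y * x ^- (m.-1 - k)) = comm (x ^+ m) y.
Proof.
elim: m => [|m IH]; first by rewrite big_ord0 /comm; gsimpl.
rewrite big_ord_recl subn0.
have shift (k : 'I_m) : (m.+1.-1 - lift ord0 k = m.-1 - k)%N by rewrite /= /bump; lia.
under eq_bigr => k _ do rewrite shift.
by rewrite IH /comm expgSr; gsimpl.
Qed.

End CommutatorProducts.

Section Presentation.
Variable n : nat.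
Local Notation N := n.+1.
Local Notation P := (PGen N).
Local Notation Ag := (fgw gA).
Local Notation Bg := (fgw gB).

Definition gen (y : P) : free_group P := fgw (fgen y).
Local Notation ga := (gen (inl false)).
Local Notation gb := (gen (inl true)).
Definition gT (i j : nat) := gen (inr (inord i, inord j)).
Definition Trow (i m : nat) := \prod_(k < m) gT i k.
Definition Tblock (m : nat) := \prod_(k < m) Trow (m.-1 - k) N.
Local Notation rel := (fgw (prel N)).

Lemma TblockS m : Tblock m.+1 = Trow m N * Tblock m.
Proof.
rewrite /Tblock big_ord_recl subn0; congr (_ * _); apply: eq_bigr => k _.
by rewrite /= /bump; congr Trow; lia.
Qed.

Lemma rel_eq : rel = ga * gb * ga^-1 * gb^-1 * (Tblock N)^-1.
Proof.
rewrite /prel fgw_fprod !big_cons big_nil !fgwV fgw_fprod mulg1 !mulgA.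
congr (_ * _ * _ * _ * _^-1).
rewrite big_allpairs_dep /= enumT /Tblock; apply: eq_bigr => i _.
apply: eq_bigr => j _; congr (fgw [:: (inr (_, _), false)]); apply: val_inj.
  by rewrite /= inordK //; have := ltn_ord i; lia.
by rewrite /= inordK.
Qed.

Definition psi : free_group P -> free_group bool := fg_lift (fun y => fgw (pimg y)).

Lemma psiM : {morph psi : x y / x * y}.
Proof. exact: fg_liftM. Qed.

Lemma psi1 : psi 1 = 1.
Proof. exact: fg_lift1. Qed.

Lemma psiV x : psi x^-1 = (psi x)^-1.
Proof. by apply: (mulIg (psi x)); rewrite -psiM !mulVg psi1. Qed.

Lemma psi_prod m (F : 'I_m -> free_group P) :
  psi (\prod_(k < m) F k) = \prod_(k < m) psi (F k).
Proof. exact: (big_morph psi psiM psi1). Qed.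

Lemma fgw_powA m : fgw (fpow gA m) = Ag ^+ m.
Proof. by rewrite fgw_fprod big_nseq iter_mulg mulg1. Qed.

Lemma fgw_powB m : fgw (fpow gB m) = Bg ^+ m.
Proof. by rewrite fgw_fprod big_nseq iter_mulg mulg1. Qed.

Lemma psi_ga : psi ga = Ag ^+ N.
Proof. by rewrite /psi fg_lift_fgen fgw_powA. Qed.

Lemma psi_gb : psi gb = Bg ^+ N.
Proof. by rewrite /psi fg_lift_fgen fgw_powB. Qed.

Lemma psi_gT i j : i < N -> j < N ->
  psi (gT i j) = Ag ^+ i * (Bg ^+ j * comm Ag Bg * Bg ^- j) * Ag ^- i.
Proof.
move=> ltiN ltjN; rewrite /psi fg_lift_fgen /= !inordK //.
rewrite /Tw fgw_fprod !big_cons big_nil !fgwV fgw_powA fgw_powB.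
by rewrite /gC fgw_fprod !big_cons big_nil !fgwV /comm; gsimpl.
Qed.

Lemma psi_Trow i m : i < N -> m <= N ->
  psi (Trow i m) = Ag ^+ i * comm Ag (Bg ^+ m) * Ag ^- i.
Proof.
move=> ltiN lemN; rewrite psi_prod -prod_conj_comm_powr; apply: eq_bigr => k _.
by rewrite psi_gT // (leq_trans (ltn_ord k)).
Qed.

Lemma psi_Tblock m : m <= N -> psi (Tblock m) = comm (Ag ^+ m) (Bg ^+ N).
Proof.
move=> lemN; rewrite psi_prod -prod_conj_comm_powl; apply: eq_bigr => k _.
by rewrite psi_Trow //; lia.
Qed.

Lemma psi_rel : psi rel = 1.
Proof. by rewrite rel_eq !psiM !psiV psi_ga psi_gb psi_Tblock // /comm; gsimpl. Qed.

Definition coset := ('I_N * 'I_N)%type.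
Definition K0 : coset := (ord0, ord0).

Definition step (K : coset) (l : letter bool) : coset :=
  match l with
  | (false, false) => (ordS K.1, K.2)
  | (false, true) => (ord_pred K.1, K.2)
  | (true, false) => (K.1, ordS K.2)
  | (true, true) => (K.1, ord_pred K.2)
  end.
Arguments step : simpl never.

Definition walk (K : coset) (w : Gam2) : coset := foldl step K w.

Definition transversal (K : coset) := Ag ^+ K.1 * Bg ^+ K.2.

Lemma transversal_K0 : transversal K0 = 1.
Proof. by rewrite /transversal !expg0 mulg1. Qed.

(* In Phi_N, A^i B^j A (A^(i+1) B^j)^-1 = A^i [A, B^j]^-1 A^-i, times A^N = a when
   i = N-1; and A^i B^j B (A^i B^(j+1))^-1 is trivial unless j = N-1, where it is
   A^i B^N A^-i = [A^i, B^N] B^N. *)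
Definition schreier_gen (K : coset) (x : bool) : free_group P :=
  if x then (if K.2 == n :> nat then Tblock K.1 * gb else 1)
  else (Trow K.1 K.2)^-1 * (if K.1 == n :> nat then ga else 1).
Arguments schreier_gen : simpl never.

Definition schreier (K : coset) (l : letter bool) :=
  if l.2 then (schreier_gen (step K l) l.1)^-1 else schreier_gen K l.1.

Fixpoint rewr (K : coset) (w : Gam2) : free_group P :=
  if w is l :: w' then schreier K l * rewr (step K l) w' else 1.

Implicit Types (K : coset) (l : letter bool) (u w : Gam2).

Lemma step_linv K l : step (step K l) (linv l) = K.
Proof. by case: K => i j; case: l => [] [] []; rewrite /step /= ?ordSK ?ord_predK. Qed.

Lemma schreier_linv K l : schreier K l * schreier (step K l) (linv l) = 1.
Proof.
case: l => x [] /=; rewrite /schreier /=; first exact: mulVg.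
have back : step (step K (x, false)) (x, true) = K := step_linv K (x, false).
by rewrite back mulgV.
Qed.

Lemma walk_cat K u w : walk K (u ++ w) = walk (walk K u) w.
Proof. exact: foldl_cat. Qed.

Lemma rewr_cat K u w : rewr K (u ++ w) = rewr K u * rewr (walk K u) w.
Proof. by elim: u K => [|l u IH] K /=; rewrite ?mul1g // IH mulgA. Qed.

Lemma walk_rewr_reduce K w :
  walk K (reduce w) = walk K w /\ rewr K (reduce w) = rewr K w.
Proof.
elim: w K => // l w IH K /=; have [<- <-] := IH (step K l).
case: (reduce w) => [|l' u] //=; case: eqP => [->|_] //.
by rewrite step_linv mulgA schreier_linv mul1g.
Qed.

Lemma walk_reduce K w : walk K (reduce w) = walk K w.
Proof. by have [] := walk_rewr_reduce K w. Qed.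

Lemma rewr_reduce K w : rewr K (reduce w) = rewr K w.
Proof. by have [] := walk_rewr_reduce K w. Qed.

Lemma walk_finv K u : walk (walk K u) (finv u) = K.
Proof. by rewrite -walk_cat -walk_reduce reduce_finvr. Qed.

Lemma rewr_finv K u : rewr (walk K u) (finv u) = (rewr K u)^-1.
Proof.
apply: (mulgI (rewr K u)); rewrite mulgV -rewr_cat -rewr_reduce.
by rewrite reduce_finvr.
Qed.

Lemma modSn_ord (i : 'I_N) : (i.+1 %% N)%N = if i == n :> nat then 0 else i.+1.
Proof.
case: eqP => [->|ne]; first by rewrite modnn.
by rewrite modn_small //; have := ltn_ord i; lia.
Qed.

Lemma psi_schreier_gen K x :
  psi (schreier_gen K x) = transversal K * fgw (fgen x) * (transversal (step K (x, false)))^-1.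
Proof.
case: K => i j; case: x; rewrite /schreier_gen /transversal /step /= modSn_ord.
  case: (eqVneq (j : nat) n) => [->|_]; last by rewrite psi1 expgSr; gsimpl.
  by rewrite psiM (psi_Tblock (ltnW (ltn_ord i))) psi_gb /comm expgSr; gsimpl.
rewrite psiM psiV (psi_Trow (ltn_ord i) (ltnW (ltn_ord j))).
case: (eqVneq (i : nat) n) => [->|_]; last by rewrite psi1 /comm expgSr; gsimpl.
by rewrite psi_ga /comm expgSr expg0; gsimpl.
Qed.

Lemma psi_schreier K l :
  psi (schreier K l) = transversal K * fgw [:: l] * (transversal (step K l))^-1.
Proof.
case: l => x []; rewrite /schreier /=; last exact: psi_schreier_gen.
have back : step (step K (x, true)) (x, false) = K := step_linv K (x, true).
rewrite psiV psi_schreier_gen back -[[:: (x, true)]]/(finv (fgen x)) fgwV.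
by gsimpl.
Qed.

Lemma psi_rewr K w : psi (rewr K w) = transversal K * fgw w * (transversal (walk K w))^-1.
Proof.
elim: w K => [|l w IH] K /=; first by rewrite psi1; gsimpl.
by rewrite psiM IH psi_schreier (fgwM [:: l] w); gsimpl.
Qed.

Local Notation lA := ((false, false) : letter bool).
Local Notation lB := ((true, false) : letter bool).

Lemma ordS_inord m : m < n -> ordS (inord m : 'I_N) = inord m.+1.
Proof. by move=> ltmn; apply: val_inj; rewrite /= !inordK ?modn_small //; lia. Qed.

Lemma ordS_inord_max : ordS (inord n : 'I_N) = ord0.
Proof. by apply: val_inj; rewrite /= inordK // modnn. Qed.

Lemma rewr_runA m : m <= n ->
  rewr K0 (nseq m lA) = 1 /\ walk K0 (nseq m lA) = (inord m, ord0).
Proof.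
elim: m => [|m IH] lemn.
  by split=> //; congr pair; apply: val_inj; rewrite /= inordK.
have [IHr IHw] := IH (ltnW lemn).
rewrite nseqSr rewr_cat walk_cat IHr IHw /= /step /= ordS_inord //.
by rewrite /schreier /schreier_gen /= /Trow big_ord0 inordK 1?ltnW // ltn_eqF.
Qed.

Lemma rewr_runB (i : 'I_N) m : m <= n ->
  rewr (i, ord0) (nseq m lB) = 1 /\ walk (i, ord0) (nseq m lB) = (i, inord m).
Proof.
elim: m => [|m IH] lemn.
  by split=> //; congr pair; apply: val_inj; rewrite /= inordK.
have [IHr IHw] := IH (ltnW lemn).
rewrite nseqSr rewr_cat walk_cat IHr IHw /= /step /= ordS_inord //.
by rewrite /schreier /schreier_gen /= inordK 1?ltnW // ltn_eqF.
Qed.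

Lemma rewr_path (i j : 'I_N) :
  rewr K0 (nseq i lA ++ nseq j lB) = 1 /\ walk K0 (nseq i lA ++ nseq j lB) = (i, j).
Proof.
have [rA wA] := rewr_runA (ltn_ord i); have [rB wB] := rewr_runB (inord i) (ltn_ord j).
by rewrite rewr_cat walk_cat rA wA rB wB !inord_val mul1g.
Qed.

Lemma gC_letters : gC = [:: lA; lB; (false, true); (true, true)].
Proof. by []. Qed.

Lemma walk_gC K : walk K gC = K.
Proof. by case: K => i j; rewrite gC_letters /= /step /= !ordSK. Qed.

Lemma rewr_gC (i j : 'I_N) : eqmod rel (rewr (i, j) gC) (gT i j).
Proof.
have -> : rewr (i, j) gC = schreier_gen (i, j) false * schreier_gen (ordS i, j) true *
    (schreier_gen (i, ordS j) false)^-1 * (schreier_gen (i, j) true)^-1.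
  by rewrite gC_letters /= /schreier /step /= !ordSK; gsimpl.
have TrowS k m : Trow k m.+1 = Trow k m * gT k m by rewrite /Trow big_ord_recr.
have Trow0 k : Trow k 0 = 1 by rewrite /Trow big_ord0.
rewrite /schreier_gen /= !modSn_ord.
case: (eqVneq (j : nat) n) => [-> | _]; last by rewrite TrowS; gsimpl; apply: eqmod_refl.
rewrite Trow0; case: (eqVneq (i : nat) n) => [-> | _]; last first.
  by rewrite TblockS TrowS; gsimpl; apply: eqmod_refl.
rewrite /Tblock big_ord0 -/(Tblock n).
have -> : (Trow n n)^-1 * ga * (1 * gb) / (1^-1 * ga) / (Tblock n * gb) =
    (Trow n n)^-1 * rel * (Tblock N / Tblock n) by rewrite rel_eq; gsimpl.
apply: eqmod_trans; first exact: eqmod_relator.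
by rewrite TblockS TrowS; gsimpl; apply: eqmod_refl.
Qed.

Lemma rewr_pimg y : walk K0 (pimg y) = K0 /\ eqmod rel (rewr K0 (pimg y)) (gen y).
Proof.
case: y => [[]|[i j]] /=.
- have [rB wB] := rewr_runB ord0 (leqnn n).
  rewrite fpow_fgen nseqSr rewr_cat walk_cat rB wB /= /step /= ordS_inord_max.
  rewrite /schreier /schreier_gen /= inordK // eqxx /Tblock big_ord0.
  by split=> //; gsimpl; apply: eqmod_refl.
- have [rA wA] := rewr_runA (leqnn n).
  rewrite fpow_fgen nseqSr rewr_cat walk_cat rA wA /= /step /= ordS_inord_max.
  rewrite /schreier /schreier_gen /= inordK // eqxx /Trow big_ord0.
  by split=> //; gsimpl; apply: eqmod_refl.
set p := nseq i lA ++ nseq j lB.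
have -> : Tw i j = reduce (p ++ gC ++ finv p).
  by rewrite /Tw /fprod /= !fpow_fgen cats0 finv_cat -!catA.
have [rp wp] : rewr K0 p = 1 /\ walk K0 p = (i, j) := rewr_path i j.
clearbody p.
rewrite walk_reduce rewr_reduce !walk_cat !rewr_cat !walk_gC walk_finv.
rewrite rewr_finv rp wp invg1 mul1g mulg1; split=> //.
by have := rewr_gC i j; rewrite /gT !inord_val.
Qed.

Lemma rewr_loops (s : seq Gam2) : (forall u, u \in s -> walk K0 u = K0) ->
  walk K0 (flatten s) = K0 /\ rewr K0 (flatten s) = \prod_(u <- s) rewr K0 u.
Proof.
elim: s => [|u s IH] loop_s /=; first by rewrite big_nil.
have [|ws rs] := IH; first by move=> v sv; apply: loop_s; rewrite in_cons sv orbT.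
by rewrite walk_cat rewr_cat big_cons loop_s ?mem_head // ws rs.
Qed.

Lemma rewr_feval v :
  walk K0 (feval (@pimg N) v) = K0 /\ eqmod rel (rewr K0 (feval (@pimg N) v)) (fgw v).
Proof.
set img := fun l : letter P => if l.2 then finv (pimg l.1) else pimg l.1.
have img_loop (l : letter P) : walk K0 (img l) = K0 /\
    eqmod rel (rewr K0 (img l)) (if l.2 then (gen l.1)^-1 else gen l.1).
  have [wl rl] := rewr_pimg l.1; rewrite /img; case: l.2 => //.
  by rewrite -{1 3}wl walk_finv rewr_finv; split=> //; apply: eqmodV.
have [] := rewr_loops (s := [seq img l | l : letter P <- v]).
  by move=> u /mapP[l _ ->]; case: (img_loop l).
rewrite /feval /fprod walk_reduce rewr_reduce => -> ->; split=> //.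
rewrite big_map (fgw_eval v); apply: eqmod_prod => l.
by case: (img_loop l).
Qed.

End Presentation.

Section ExponentSums.
Variable n : nat.
Local Notation N := n.+1.
Local Notation K0 := (K0 n).
Local Open Scope ring_scope.

Lemma expsum_cons (x : bool) (l : letter bool) w : expsum x (l :: w) =
  (if l.1 == x then (if l.2 then -1 else 1) else 0) + expsum x w.
Proof. by rewrite /expsum big_cons; case: ifP => _ //; rewrite add0r. Qed.

Lemma walk_expsum (K : coset n) w :
  ((walk K w).1 : int) = ((((K.1 : nat) : int) + expsum false w) %% N)%Z /\
  ((walk K w).2 : int) = ((((K.2 : nat) : int) + expsum true w) %% N)%Z.
Proof.
elim: w K => [|l w IH] K.
  have := ltn_ord K.1; have := ltn_ord K.2.
  by rewrite /expsum !big_nil !addr0 => *; split; rewrite modz_small //; lia.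
have [-> ->] := IH (step K l); rewrite !expsum_cons; case: K => i j.
case: l => [[] []]; rewrite /step /= ?add0r; split=> //; rewrite -modz_nat modzDml.
all: first [by congr (_ %% _)%Z; lia | by rewrite -[in RHS]modzDr; congr (_ %% _)%Z; lia].
Qed.

Lemma walk_K0P w : walk K0 w = K0 <->
  (N%:Z %| expsum false w)%Z /\ (N%:Z %| expsum true w)%Z.
Proof.
have [ei ej] := walk_expsum K0 w; rewrite /= !add0r in ei ej; split=> [E | [d1 d2]].
  by move: ei ej; rewrite E /= => ei ej; split; apply/dvdz_mod0P; rewrite -?ei -?ej.
move: ei ej; rewrite (dvdz_mod0P d1) (dvdz_mod0P d2).
by case: (walk K0 w) => i j /= ei ej; congr pair; apply: val_inj => /=; lia.
Qed.

End ExponentSums.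

Section Components.
Variable n : nat.
Local Notation N := n.+1.
Local Notation P := (PGen N).

Lemma feval_psi (v : word P) : feval (@pimg N) v = val (psi (fgw v)).
Proof. by rewrite feval_lift /psi fg_lift_fgw. Qed.

Lemma Phi_feval (v : word P) : Phi N (feval (@pimg N) v).
Proof.
split; first exact: reduce_idem.
by apply/walk_K0P; have [] := rewr_feval v.
Qed.

Lemma Phi_surj w : Phi N w -> exists v : word P, reduced v /\ feval (@pimg N) v = w.
Proof.
move=> [w_red /walk_K0P loop_w].
exists (val (rewr (K0 n) w)); split; first exact/eqP/(valP (rewr (K0 n) w)).
by rewrite feval_psi fgw_val psi_rewr loop_w transversal_K0 mul1g invg1 mulg1.
Qed.

Lemma feval_kernel (v : word P) : reduced v ->
  (feval (@pimg N) v = [::] <-> in_normal_closure (prel N) v).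
Proof.
move=> v_red; rewrite in_normal_closureP // feval_psi; split=> [trivial_v | ncl_v].
  have [_] := rewr_feval v; rewrite feval_psi trivial_v /= => /eqmod_sym.
  by rewrite /eqmod invg1 mulg1.
by rewrite (in_ncl_kernel (@psiM n) (psi_rel n) ncl_v).
Qed.

Lemma inU_pimg g : inU N g <-> exists y : P, g = pimg y.
Proof.
split=> [[->|[->|[i [j [ltiN [ltjN ->]]]]]] | [[[]|[i j]] ->]].
- by exists (inl false).
- by exists (inl true).
- by exists (inr (Ordinal ltiN, Ordinal ltjN)).
- by right; left.
- by left.
by right; right; exists i, j.
Qed.

Lemma Phi_subgroup w : Phi N w <-> in_subgroup_gen (inU N) w.
Proof.
split=> [/Phi_surj[v [_ <-]] | [s [sU ->]]].
  exists [seq (pimg l.1, l.2) | l <- v]; rewrite /feval -map_comp; split=> //.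
  by move=> p /mapP[l _ ->]; apply/inU_pimg; exists l.1.
split; first exact: reduce_idem.
apply/walk_K0P; rewrite /fprod walk_reduce; apply: (proj1 (rewr_loops _)).
move=> u /mapP[p /sU /inU_pimg[y ->] ->]; have [wy _] := rewr_pimg y.
by case: p.2; rewrite // -{1}wy walk_finv.
Qed.

End Components.

Theorem proposition6 (N : nat) (hN : (0 < N)%N) :
  (* Phi_N is the subgroup generated by U *)
  (forall w : Gam2, Phi N w <-> in_subgroup_gen (inU N) w) /\
  (* the map from the free group on a, b, T_{i,j} lands in Phi_N ... *)
  (forall v : word (PGen N : eqType), reduced v -> Phi N (feval (@pimg N) v)) /\
  (* ... is onto Phi_N ... *)
  (forall w : Gam2, Phi N w ->
     exists v : word (PGen N : eqType), reduced v /\ feval (@pimg N) v = w) /\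
  (* ... and its kernel is the normal closure of the single relator *)
  (forall v : word (PGen N : eqType), reduced v ->
     (feval (@pimg N) v = [::] <-> in_normal_closure (prel N) v)).
Proof.
case: N hN => // n _.
split; first exact: Phi_subgroup.
split; first by move=> v _; apply: Phi_feval.
split; first exact: Phi_surj.
exact: feval_kernel.
Qed.
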